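(* Let $X$ be a complex Banach space, $\mathcal{F}$ an algebra with unit, $\mathcal{E}\subseteq\mathcal{F}$ a subalgebra and $\Phi:\mathcal{E}\to\mathcal{L}(X)$ a non-degenerate algebra representation. Then the set $$\mathrm{anc}(\mathcal{E},\mathcal{F},\Phi):=\{f\in\mathcal{F}: \text{for all } e\in\mathcal{E},\ [ef]_{\mathcal{E}} \text{ is a } \Phi\text{-anchor set}\}$$ is a unital subalgebra of $\mathcal{F}$ that contains $\mathcal{E}$ and is anchored in $\mathcal{E}$. Moreover, $\mathrm{anc}(\mathcal{E},\mathcal{F},\Phi)$ contains every unital subalgebra of $\mathcal{F}$ that contains $\mathcal{E}$ and is anchored in $\mathcal{E}$.
   Context: $\mathcal{F}$ need not be commutative; $\mathcal{E}$ need not be unital. An algebra representation is an algebra homomorphism into $\mathcal{L}(X)$. For $f\in\mathcal{F}$, $[f]_{\mathcal{E}}=\{e\in\mathcal{E}:ef\in\mathcal{E}\}$. A subset $\mathcal{M}\subseteq\mathcal{E}$ is a $\Phi$-anchor set if $\mathcal{M}\neq\emptyset$ and $\bigcap_{e\in\mathcal{M}}\ker\Phi(e)=\{0\}$. $f$ is anchored in $\mathcal{E}$ if $[f]_{\mathcal{E}}$ is a $\Phi$-anchor set; a subset of $\mathcal{F}$ is anchored in $\mathcal{E}$ if all its elements are. $\Phi$ is non-degenerate if $\mathcal{E}$ itself is a $\Phi$-anchor set. *)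

From HB Require Import structures.
From mathcomp Require Import all_boot all_order all_algebra.
From mathcomp Require Import complex.
From mathcomp Require Import all_classical all_reals all_analysis.
Import GRing.Theory Num.Theory.
Set Implicit Arguments. Unset Strict Implicit. Unset Printing Implicit Defensive.
Local Open Scope ring_scope.

Definition is_subalgebra (K : pzRingType) (F : algType K) (A : F -> Prop) : Prop :=
  [/\ A 0,
      (forall a b, A a -> A b -> A (a + b)),
      (forall (c : K) a, A a -> A (c *: a)) &
      (forall a b, A a -> A b -> A (a * b))].

Definition is_unital_subalgebra (K : pzRingType) (F : algType K) (A : F -> Prop) : Prop :=
  is_subalgebra A /\ A 1.

(* Values of Phi outside E
   are irrelevant. *)
Definition is_algebra_rep (R : realType) (X : normedModType R[i])
  (F : algType R[i]) (E : F -> Prop) (Phi : F -> X -> X) : Prop :=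
  [/\ (forall e, E e -> forall (c : R[i]) (x y : X), Phi e (c *: x + y) = c *: Phi e x + Phi e y),
      (forall e, E e -> continuous (Phi e)),
      (forall e1 e2, E e1 -> E e2 -> forall (c : R[i]) (x : X),
          Phi (c *: e1 + e2) x = c *: Phi e1 x + Phi e2 x) &
      (forall e1 e2, E e1 -> E e2 -> forall x : X, Phi (e1 * e2) x = Phi e1 (Phi e2 x))].

Definition bracket (K : pzRingType) (F : algType K) (E : F -> Prop) (f : F) : F -> Prop :=
  fun e => E e /\ E (e * f).

Definition anchor_set (K : pzRingType) (F : algType K) (X : zmodType)
  (Phi : F -> X -> X) (M : F -> Prop) : Prop :=
  (exists e, M e) /\ (forall x : X, (forall e, M e -> Phi e x = 0) -> x = 0).

Definition anchored (K : pzRingType) (F : algType K) (X : zmodType)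
  (E : F -> Prop) (Phi : F -> X -> X) (f : F) : Prop :=
  anchor_set Phi (bracket E f).

Definition set_anchored (K : pzRingType) (F : algType K) (X : zmodType)
  (E : F -> Prop) (Phi : F -> X -> X) (A : F -> Prop) : Prop :=
  forall f, A f -> anchored E Phi f.

Definition rep_nondegenerate (K : pzRingType) (F : algType K) (X : zmodType)
  (E : F -> Prop) (Phi : F -> X -> X) : Prop :=
  anchor_set Phi E.

Definition anc (K : pzRingType) (F : algType K) (X : zmodType)
  (E : F -> Prop) (Phi : F -> X -> X) : F -> Prop :=
  fun f => forall e, E e -> anchor_set Phi (bracket E (e * f)).

From HB Require Import structures.
From mathcomp Require Import all_boot all_order all_algebra.
From mathcomp Require Import complex.
From mathcomp Require Import all_classical all_reals all_analysis.
Import GRing.Theory Num.Theory.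
Local Open Scope ring_scope.

(* Only the multiplicativity of Phi matters.  If M is an anchor set and every
   m in M comes with an anchor set N m, then the products n * m form an anchor
   set, because Phi (n * m) x = Phi n (Phi m x) vanishes for all n only if
   Phi m x = 0.  Closure of anc under sums and products is the instance
   M = [e f]_E with N m a bracket built from g, and anchoredness of f in anc
   is the instance M = E, N e = [e f]_E. *)

Lemma anchor_set_sub (K : pzRingType) (F : algType K) (X : zmodType)
  (Phi : F -> X -> X) (M P : F -> Prop) :
  (forall e, M e -> P e) -> anchor_set Phi M -> anchor_set Phi P.
Proof.
move=> MP [[e Me] M_anchor]; split; first by exists e; apply: MP.
by move=> x Px0; apply: M_anchor => e' Me'; apply/Px0/MP.
Qed.

Section Anchored.

Variables (K : pzRingType) (F : algType K) (X : zmodType).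
Variables (E : F -> Prop) (Phi : F -> X -> X).

Hypothesis E_subalgebra : is_subalgebra E.
Hypothesis Phi_mul :
  forall e1 e2, E e1 -> E e2 -> forall x, Phi (e1 * e2) x = Phi e1 (Phi e2 x).

Let E0 : E 0. Proof. by case: E_subalgebra. Qed.
Let ED a b : E a -> E b -> E (a + b).
Proof. by case: E_subalgebra => _ ED _ _; apply: ED. Qed.
Let EZ c a : E a -> E (c *: a).
Proof. by case: E_subalgebra => _ _ EZ _; apply: EZ. Qed.
Let EM a b : E a -> E b -> E (a * b).
Proof. by case: E_subalgebra => _ _ _ EM; apply: EM. Qed.

Lemma anchor_set_mul (M : F -> Prop) (N : F -> F -> Prop) (P : F -> Prop) :
  (forall m, M m -> E m) -> (forall m n, M m -> N m n -> E n) ->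
  anchor_set Phi M -> (forall m, M m -> anchor_set Phi (N m)) ->
  (forall m n, M m -> N m n -> P (n * m)) -> anchor_set Phi P.
Proof.
move=> ME NE [[m0 Mm0] M_anchor] N_anchor NMP; split.
  by have [[n Nn] _] := N_anchor m0 Mm0; exists (n * m0); apply: NMP.
move=> x Px0; apply: M_anchor => m Mm.
case: (N_anchor m Mm) => _; apply=> n Nn.
by rewrite -Phi_mul ?Px0 //; [apply: NMP | apply: NE Nn | apply: ME].
Qed.

Lemma ancD f g : anc E Phi f -> anc E Phi g -> anc E Phi (f + g).
Proof.
move=> f_anc g_anc e Ee.
apply: (@anchor_set_mul (bracket E (e * f)) (fun m => bracket E (m * e * g))).
- by move=> m [].
- by move=> m n _ [].
- exact: f_anc.
- by move=> m [Em _]; apply/g_anc/EM.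
- move=> m n [Em Emef] [En Enmeg]; split; first exact: EM.
  rewrite !mulrDr -!mulrA; apply: ED; first exact: EM.
  by rewrite -mulrA in Enmeg.
Qed.

Lemma ancZ c f : anc E Phi f -> anc E Phi (c *: f).
Proof.
move=> f_anc e Ee; apply: anchor_set_sub (f_anc e Ee) => e' [Ee' Ee'ef].
by split=> //; rewrite -!scalerAr; apply: EZ.
Qed.

Lemma ancM f g : anc E Phi f -> anc E Phi g -> anc E Phi (f * g).
Proof.
move=> f_anc g_anc e Ee.
apply: (@anchor_set_mul (bracket E (e * f)) (fun m => bracket E (m * (e * f) * g))).
- by move=> m [].
- by move=> m n _ [].
- exact: f_anc.
- by move=> m [Em Emef]; apply: g_anc.
- move=> m n [Em _] [En Enmefg]; split; first exact: EM.
  by rewrite -!mulrA in Enmefg *.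
Qed.

Hypothesis Phi_nondegenerate : rep_nondegenerate E Phi.

Lemma anchored_mem f : E f -> anchored E Phi f.
Proof.
by move=> Ef; apply: anchor_set_sub Phi_nondegenerate => e Ee; split=> //; apply: EM.
Qed.

Lemma anc_mem e : E e -> anc E Phi e.
Proof. by move=> Ee e' Ee'; apply/anchored_mem/EM. Qed.

Lemma anc0 : anc E Phi 0.
Proof. by move=> e _; rewrite mulr0; apply: anchored_mem. Qed.

Lemma anc1 : anc E Phi 1.
Proof. by move=> e Ee; rewrite mulr1; apply: anchored_mem. Qed.

Lemma anc_anchored f : anc E Phi f -> anchored E Phi f.
Proof.
move=> f_anc; apply: (@anchor_set_mul E (fun e => bracket E (e * f))) => //.
- by move=> m n _ [].
- move=> m n Em [En Enmf]; split; first exact: EM.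
  by rewrite -mulrA.
Qed.

End Anchored.

Theorem theorem6p4 (R : realType) (X : completeNormedModType R[i])
  (F : algType R[i]) (E : F -> Prop) (Phi : F -> X -> X) :
  is_subalgebra E ->
  is_algebra_rep E Phi ->
  rep_nondegenerate E Phi ->
  [/\ is_unital_subalgebra (anc E Phi),
      (forall e, E e -> anc E Phi e),
      set_anchored E Phi (anc E Phi) &
      (forall A : F -> Prop, is_unital_subalgebra A -> (forall e, E e -> A e) ->
         set_anchored E Phi A -> forall f, A f -> anc E Phi f)].
Proof.
move=> E_subalgebra [_ _ _ Phi_mul] Phi_nondeg.
split.
- split; last exact: anc1.
  split; [exact: anc0 | exact: ancD | exact: ancZ | exact: ancM].
- exact: anc_mem.
- exact: anc_anchored.
- move=> A [[_ _ _ AM] _] EA A_anchored f Af e Ee.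
  exact/A_anchored/AM/Af/EA.
Qed.
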